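(* Let $\mathcal{E}=(E,\leq,\sharp)$ be a prime event structure and $C$ a configuration of $\mathcal{E}$. (i) If $C\xrightarrow{e}C'$ is a step of $\mathcal{E}$, then $\emptyset\triangleright\textsc{espsi}(\mathcal{E},C)\xrightarrow{\overline{e}e}\textsc{espsi}(\mathcal{E},C')$. (ii) Conversely, if $\emptyset\triangleright\textsc{espsi}(\mathcal{E},C)\xrightarrow{\overline{e}e}P'$ for some process $P'$, then there is a configuration $C'$ with $C\xrightarrow{e}C'$ and $P'=\textsc{espsi}(\mathcal{E},C')$.
   Context: A prime event structure is a triple $\mathcal{E}=(E,\leq,\sharp)$ where $E$ is a set of events (names from a nominal set), $\leq$ is a partial order on $E$ with $\{d\mid d\leq e\}$ finite for every $e$, and $\sharp$ is an irreflexive symmetric relation on $E$ with conflict heredity ($d\leq e$ and $d\sharp f$ imply $e\sharp f$). A configuration is a finite, conflict-free, downward-closed subset of $E$. A step $C\xrightarrow{e}C'$ holds iff $C,C'$ are configurations, $e\notin C$ and $C'=C\cup\{e\}$. Psi-calculus fragment. Processes: assertion processes $(\!|\Psi|\!)$, output prefixes $\overline{M}\langle N\rangle.P$, case processes $\mathbf{case}\ \varphi_1:P_1,\dots,\varphi_n:P_n$, and parallel compositions (also of infinite families). Frames: $\mathcal{F}((\!|\Psi|\!))=\Psi$, $\mathcal{F}(P\mid Q)=\mathcal{F}(P)\otimes\mathcal{F}(Q)$ (composition over all components for families), and the frame of prefixed and case processes is the unit $\mathbf{1}$. Transitions $\Psi\triangleright P\xrightarrow{\alpha}P'$ are generated by: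 (Out) if $\Psi\vdash M\leftrightarrow K$ then $\Psi\triangleright\overline{M}\langle N\rangle.P\xrightarrow{\overline{K}N}P$; (Case) if $\Psi\triangleright P_i\xrightarrow{\alpha}P'$ and $\Psi\vdash\varphi_i$ then $\Psi\triangleright\mathbf{case}\ \tilde\varphi:\tilde P\xrightarrow{\alpha}P'$; (Par) if $\Psi\otimes\mathcal{F}(Q)\triangleright P\xrightarrow{\alpha}P'$ then $\Psi\triangleright P\mid Q\xrightarrow{\alpha}P'\mid Q$, symmetrically for $Q$, and for a parallel family one component moves in context $\Psi$ composed with the frames of all other components, the others remaining unchanged. Assertion processes have no transitions. Event-psi instance over $E$: terms are elements of $E$; conditions are pairs $(L,R)$ of subsets of $E$; assertions are subsets of $E$; $\otimes=\cup$; $\mathbf{1}=\emptyset$; entailment: $\Psi\vdash(L,R)$ iff $L\subseteq\Psi$ and $\Psi\cap R=\emptyset$, and $\Psi\vdash a\leftrightarrow b$ iff $a=b$. Translation: $\textsc{espsi}(\mathcal{E},C)=\big|_{e\in E}P_e$ where $P_e=(\!|\{e\}|\!)$ if $e\in C$ and otherwise $P_e=\mathbf{case}\ \varphi_e:\overline{e}\langle e\rangle.(\!|\{e\}|\!)$, with $\varphi_e=(\{d\in E\mid d\leq e,\ d\neq e\},\{d\in E\mid d\sharp e\})$. Processes are compared as $E$-indexed parallel families. *)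

From Stdlib Require Import List Classical ClassicalEpsilon.
Import ListNotations.
Set Implicit Arguments.

Section PES.
Variable E : Type.

Definition fset_finite (C : E -> Prop) : Prop :=
  exists l : list E, forall x, C x <-> In x l.

Record prime_event_structure (le conf : E -> E -> Prop) : Prop := {
  pes_refl : forall e, le e e;
  pes_antisym : forall d e, le d e -> le e d -> d = e;
  pes_trans : forall d e f, le d e -> le e f -> le d f;
  pes_finite_down : forall e, fset_finite (fun d => le d e);
  pes_irrefl : forall e, ~ conf e e;
  pes_sym : forall d e, conf d e -> conf e d;
  pes_hered : forall d e f, le d e -> conf d f -> conf e f
}.

Definition configuration (le conf : E -> E -> Prop) (C : E -> Prop) : Prop :=
  fset_finite C /\
  (forall d e, C d -> C e -> ~ conf d e) /\
  (forall d e, le d e -> C e -> C d).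

Definition step (le conf : E -> E -> Prop) (C : E -> Prop) (e : E) (C' : E -> Prop) : Prop :=
  configuration le conf C /\ configuration le conf C' /\ ~ C e /\
  (forall x, C' x <-> C x \/ x = e).

Definition assertion := E -> Prop.
Definition a_comp (P Q : assertion) : assertion := fun x => P x \/ Q x.
Definition a_unit : assertion := fun _ => False.

Definition condition := ((E -> Prop) * (E -> Prop))%type.

Definition entails_cond (Psi : assertion) (phi : condition) : Prop :=
  (forall x, fst phi x -> Psi x) /\ (forall x, Psi x -> snd phi x -> False).

Definition entails_chan (Psi : assertion) (a b : E) : Prop := a = b.

Inductive proc : Type :=
| PAssert : assertion -> proc
| POut : E -> E -> proc -> proc
| PCase : list (condition * proc) -> proc
| PPar : proc -> proc -> proc.

Fixpoint frame (P : proc) : assertion :=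
  match P with
  | PAssert Psi => Psi
  | PPar P Q => a_comp (frame P) (frame Q)
  | _ => a_unit
  end.

Inductive label : Type := LOut : E -> E -> label.

Inductive trans : assertion -> proc -> label -> proc -> Prop :=
| TOut : forall Psi M K N P,
    entails_chan Psi M K -> trans Psi (POut M N P) (LOut K N) P
| TCase : forall Psi l phi P a P',
    In (phi, P) l -> trans Psi P a P' -> entails_cond Psi phi ->
    trans Psi (PCase l) a P'
| TParL : forall Psi P Q a P',
    trans (a_comp Psi (frame Q)) P a P' -> trans Psi (PPar P Q) a (PPar P' Q)
| TParR : forall Psi P Q a Q',
    trans (a_comp Psi (frame P)) Q a Q' -> trans Psi (PPar P Q) a (PPar P Q').

(* E-indexed parallel families |_{e in E} F e *)
Definition family := E -> proc.

Definition frame_others (F : family) (e : E) : assertion :=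
  fun x => exists d, d <> e /\ frame (F d) x.

Definition trans_fam (Psi : assertion) (F : family) (a : label) (F' : family) : Prop :=
  exists e P', trans (a_comp Psi (frame_others F e)) (F e) a P' /\
    F' e = P' /\ (forall d, d <> e -> F' d = F d).

Definition phi_e (le conf : E -> E -> Prop) (e : E) : condition :=
  (fun d => le d e /\ d <> e, fun d => conf d e).

Definition espsi (le conf : E -> E -> Prop) (C : E -> Prop) : family :=
  fun e =>
    if excluded_middle_informative (C e) then PAssert (fun d => d = e)
    else PCase [(phi_e le conf e, POut e e (PAssert (fun d => d = e)))].

End PES.

(* A component [espsi C e] with [e] outside [C] can only fire the output
   [e<e>], guarded by the condition [phi_e e], and it is evaluated in the
   union of the frames of the other components, which is exactly [C] minus
   [e].  So the guard holds iff the strict causes of [e] lie in [C] and no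
   event of [C] conflicts with [e], i.e. iff [C u {e}] is again a
   configuration; firing turns the component into the assertion [{e}],
   which is the translation of [C u {e}]. *)

From Stdlib Require Import List Classical ClassicalEpsilon FunctionalExtensionality.
Import ListNotations.

Set Implicit Arguments.

Section EventPsi.

Variables (E : Type) (le conf : E -> E -> Prop).

Definition add_event (C : E -> Prop) (e : E) : E -> Prop := fun x => C x \/ x = e.

Definition enabled (C : E -> Prop) (e : E) : Prop :=
  (forall d, le d e -> d <> e -> C d) /\ (forall d, C d -> ~ conf d e).

Lemma espsi_in (C : E -> Prop) e :
  C e -> espsi le conf C e = PAssert (fun d => d = e).
Proof.
  intros Ce; unfold espsi.
  destruct (excluded_middle_informative (C e)); tauto.
Qed.

Lemma espsi_notin (C : E -> Prop) e :
  ~ C e ->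
  espsi le conf C e = PCase [(phi_e le conf e, POut e e (PAssert (fun d => d = e)))].
Proof.
  intros nCe; unfold espsi.
  destruct (excluded_middle_informative (C e)); tauto.
Qed.

Lemma espsi_eq_at (C C' : E -> Prop) d :
  (C d <-> C' d) -> espsi le conf C d = espsi le conf C' d.
Proof.
  intros HCC'; unfold espsi.
  destruct (excluded_middle_informative (C d)),
           (excluded_middle_informative (C' d)); tauto.
Qed.

Lemma frame_espsi (C : E -> Prop) d x :
  frame (espsi le conf C d) x <-> C d /\ x = d.
Proof.
  destruct (classic (C d)) as [Cd | nCd].
  - rewrite espsi_in by exact Cd; simpl; tauto.
  - rewrite espsi_notin by exact nCd; simpl; unfold a_unit; tauto.
Qed.

Lemma context_espsi (C : E -> Prop) e x :
  a_comp (@a_unit E) (frame_others (espsi le conf C) e) x <-> C x /\ x <> e.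
Proof.
  unfold a_comp, a_unit, frame_others; split.
  - intros [[] | [d [Hde Hfr]]].
    apply frame_espsi in Hfr as [Cd ->]; auto.
  - intros [Cx Hxe]; right; exists x.
    split; [exact Hxe | apply frame_espsi; auto].
Qed.

Lemma trans_espsi (C : E -> Prop) Psi e :
  ~ C e -> entails_cond Psi (phi_e le conf e) ->
  trans Psi (espsi le conf C e) (LOut e e) (PAssert (fun d => d = e)).
Proof.
  intros nCe Hphi; rewrite espsi_notin by exact nCe.
  eapply TCase; [left; reflexivity | constructor; reflexivity | exact Hphi].
Qed.

Lemma trans_espsi_inv (C : E -> Prop) Psi e a b P' :
  trans Psi (espsi le conf C e) (LOut a b) P' ->
  ~ C e /\ a = e /\ b = e /\ P' = PAssert (fun d => d = e) /\
  entails_cond Psi (phi_e le conf e).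
Proof.
  intros Htr.
  destruct (classic (C e)) as [Ce | nCe].
  { rewrite espsi_in in Htr by exact Ce; inversion Htr. }
  rewrite espsi_notin in Htr by exact nCe.
  inversion Htr as [| ? ? phi P ? ? Hin Hout Hphi | |]; subst.
  destruct Hin as [Hin | []]; injection Hin as <- <-.
  inversion Hout as [? ? ? ? ? Hchan | | |]; subst.
  unfold entails_chan in Hchan; subst.
  tauto.
Qed.

Hypothesis HE : prime_event_structure le conf.

Lemma entails_phi_e_iff (C : E -> Prop) e :
  entails_cond (a_comp (@a_unit E) (frame_others (espsi le conf C) e)) (phi_e le conf e)
  <-> enabled C e.
Proof.
  unfold entails_cond, enabled, phi_e; simpl; split.
  - intros [Hcauses Hconf]; split.
    + intros d Hde Hne; apply (context_espsi C e d), Hcauses; auto.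
    + intros d Cd Hc.
      (* [d <> e] is needed to see [d] in the context: irreflexivity gives it *)
      assert (d <> e) by (intros ->; exact (pes_irrefl HE e Hc)).
      apply (Hconf d); [apply context_espsi; auto | exact Hc].
  - intros [Hcauses Hconf]; split.
    + intros x [Hxe Hne]; apply context_espsi; auto.
    + intros x Hx Hc; apply context_espsi in Hx as [Cx _].
      exact (Hconf x Cx Hc).
Qed.

Lemma configuration_add_event (C : E -> Prop) e :
  configuration le conf C -> enabled C e -> configuration le conf (add_event C e).
Proof.
  intros [[l Hl] [Hcf Hdc]] [Hcauses Hconf]; unfold add_event.
  split; [| split].
  - exists (e :: l); intros x; simpl; rewrite Hl; intuition congruence.
  - intros d f [Cd | ->] [Cf | ->] Hc.
    + exact (Hcf d f Cd Cf Hc).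
    + exact (Hconf d Cd Hc).
    + exact (Hconf f Cf (pes_sym HE _ _ Hc)).
    + exact (pes_irrefl HE _ Hc).
  - intros d f Hdf [Cf | ->].
    + left; exact (Hdc d f Hdf Cf).
    + destruct (classic (d = e)); [right | left; apply Hcauses]; auto.
Qed.

Lemma step_add_event (C : E -> Prop) e :
  configuration le conf C -> ~ C e -> enabled C e -> step le conf C e (add_event C e).
Proof.
  intros HC nCe Hen; split; [exact HC |].
  split; [exact (configuration_add_event HC Hen) |].
  split; [exact nCe | unfold add_event; tauto].
Qed.

Lemma step_enabled (C C' : E -> Prop) e : step le conf C e C' -> enabled C e.
Proof.
  intros [_ [[_ [Hcf' Hdc']] [nCe HC']]]; split.
  - intros d Hde Hne.
    destruct (proj1 (HC' d) (Hdc' d e Hde (proj2 (HC' e) (or_intror eq_refl))))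
      as [Cd | ->]; tauto.
  - intros d Cd; apply Hcf'; apply HC'; auto.
Qed.

End EventPsi.

Theorem mainTheorem2 (E : Type) (le conf : E -> E -> Prop)
  (HE : prime_event_structure le conf) (C : E -> Prop)
  (HC : configuration le conf C) :
  (forall (e : E) (C' : E -> Prop), step le conf C e C' ->
     trans_fam (@a_unit E) (espsi le conf C) (LOut e e) (espsi le conf C')) /\
  (forall (e : E) (P' : family E),
     trans_fam (@a_unit E) (espsi le conf C) (LOut e e) P' ->
     exists C' : E -> Prop, step le conf C e C' /\ P' = espsi le conf C').
Proof.
  split.
  - intros e C' Hstep.
    pose proof Hstep as [_ [_ [nCe HC']]].
    exists e, (PAssert (fun d => d = e)); split; [| split].
    + apply trans_espsi; [exact nCe |].
      apply entails_phi_e_iff; [exact HE |].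
      exact (step_enabled Hstep).
    + apply espsi_in, HC'; auto.
    + intros d Hde; apply espsi_eq_at; rewrite HC'; tauto.
  - intros e P' [e0 [P0 [Htr [He0 Hothers]]]].
    apply trans_espsi_inv in Htr as (nCe & <- & _ & -> & Hphi).
    apply entails_phi_e_iff in Hphi; [| exact HE].
    exists (add_event C e); split; [now apply step_add_event |].
    apply functional_extensionality; intros d.
    destruct (classic (d = e)) as [-> | Hde].
    + rewrite espsi_in; [exact He0 | right; reflexivity].
    + rewrite Hothers by exact Hde.
      apply espsi_eq_at; unfold add_event; tauto.
Qed.
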